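(* Let $\mathbf{H}\in\mathcal{S}^{12}$, $\mathbf{H}\succ0$, and let $(\bar{\mathbf{R}},\bar{\mathbf{t}})\in\mathrm{SO}(3)\times\mathbb{R}^3$. Let $\mathbf{P}_r=[\mathbf{I}_9\ \mathbf{0}_{9\times3}]$ and $\mathbf{H}_r=(\mathbf{P}_r\mathbf{H}^{-1}\mathbf{P}_r^\mathsf{T})^{-1}$. Let $\mathbf{P}_\theta\in\mathbb{R}^{3\times9}$ be the matrix such that for every $\mathbf{M}\in\mathbb{R}^{3\times3}$, $\mathbf{P}_\theta\mathrm{vec}(\mathbf{M})=[M_{32}-M_{23},\ M_{13}-M_{31},\ M_{21}-M_{12}]^\mathsf{T}$, and define $$\mathbf{H}_\theta=4\left(\mathbf{P}_\theta\left[(\bar{\mathbf{R}}^\mathsf{T}\otimes\mathbf{I}_3)^\mathsf{T}\mathbf{H}_r(\bar{\mathbf{R}}^\mathsf{T}\otimes\mathbf{I}_3)\right]^{-1}\mathbf{P}_\theta^\mathsf{T}\right)^{-1}.$$ Suppose $(\mathbf{R},\mathbf{t})\in\mathrm{SO}(3)\times\mathbb{R}^3$ satisfies $$\begin{bmatrix}\mathrm{vec}(\mathbf{R}-\bar{\mathbf{R}})\\ \mathbf{t}-\bar{\mathbf{t}}\end{bmatrix}^\mathsf{T}\mathbf{H}\begin{bmatrix}\mathrm{vec}(\mathbf{R}-\bar{\mathbf{R}})\\ \mathbf{t}-\bar{\mathbf{t}}\end{bmatrix}\le1,$$ and write $\mathbf{R}=\mathbf{R}_{\boldsymbol{\omega}}(\theta)\bar{\mathbf{R}}$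 with axis $\boldsymbol{\omega}\in\mathbb{S}^2$ and angle $\theta$. If $\theta\le90^\circ$, then $$(\boldsymbol{\omega}\sin\theta)^\mathsf{T}\mathbf{H}_\theta(\boldsymbol{\omega}\sin\theta)\le1.$$ Moreover, for $\boldsymbol{\xi}=\boldsymbol{\omega}\sin\theta$ one has $\boldsymbol{\omega}=\boldsymbol{\xi}/\|\boldsymbol{\xi}\|_2$ and $\sin\theta=\|\boldsymbol{\xi}\|_2$.
   Context: $\mathrm{vec}$ stacks columns; $\otimes$ is the Kronecker product; $\mathbb{S}^2$ is the unit sphere in $\mathbb{R}^3$. $\mathbf{R}_{\boldsymbol{\omega}}(\theta)$ is the rotation by angle $\theta$ about axis $\boldsymbol{\omega}$ given by Rodrigues' formula $\mathbf{R}_{\boldsymbol{\omega}}(\theta)=\mathbf{I}_3+\hat{\boldsymbol{\omega}}\sin\theta+\hat{\boldsymbol{\omega}}^2(1-\cos\theta)$, where $\hat{\boldsymbol{\omega}}$ is the skew-symmetric cross-product matrix with rows $(0,-\omega_3,\omega_2)$, $(\omega_3,0,-\omega_1)$, $(-\omega_2,\omega_1,0)$. *)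

From mathcomp Require Import all_boot all_order all_algebra.
From mathcomp Require Import all_classical all_reals all_analysis.
From mathcomp Require Export mxtens.
Set Implicit Arguments. Unset Strict Implicit. Unset Printing Implicit Defensive.
Import Order.TTheory GRing.Theory Num.Theory.
Local Open Scope ring_scope.

Section Defs.
Variable R : realType.

(* vec: column stacking.  Entry of index j*m + i is M i j
   (same index convention as the Kronecker product  A *t B  of mxtens). *)
Definition vec {m n : nat} (M : 'M[R]_(m, n)) : 'cV[R]_(n * m) :=
  \col_k M (mxtens_unindex k).2 (mxtens_unindex k).1.

Definition qform {n : nat} (A : 'M[R]_n) (x : 'cV[R]_n) : R := (x^T *m A *m x) 0 0.

Definition norm2 {n : nat} (x : 'cV[R]_n) : R := Num.sqrt (\sum_i x i 0 ^+ 2).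

Definition posdef {n : nat} (A : 'M[R]_n) : Prop :=
  A^T = A /\ forall x : 'cV[R]_n, x != 0 -> 0 < qform A x.

Definition is_SO3 (M : 'M[R]_3) : Prop := M^T *m M = 1%:M /\ \det M = 1.

Definition i0 : 'I_3 := inord 0.
Definition i1 : 'I_3 := inord 1.
Definition i2 : 'I_3 := inord 2.

Definition skew (w : 'cV[R]_3) : 'M[R]_3 :=
  \matrix_(i, j)
   (if (i == i0) && (j == i1) then - w i2 0 else
    if (i == i0) && (j == i2) then w i1 0 else
    if (i == i1) && (j == i0) then w i2 0 else
    if (i == i1) && (j == i2) then - w i0 0 else
    if (i == i2) && (j == i0) then - w i1 0 else
    if (i == i2) && (j == i1) then w i0 0 else 0).

Definition rodrigues (w : 'cV[R]_3) (th : R) : 'M[R]_3 :=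
  1%:M + sin th *: skew w + (1 - cos th) *: (skew w *m skew w).

Definition vex (M : 'M[R]_3) : 'cV[R]_3 :=
  \col_k (if k == i0 then M i2 i1 - M i1 i2 else
          if k == i1 then M i0 i2 - M i2 i0 else M i1 i0 - M i0 i1).

Definition unvec3 (v : 'cV[R]_(3 * 3)) : 'M[R]_3 :=
  \matrix_(i, j) v (mxtens_index (j, i)) 0.

(* P_theta : column l is vex of the matrix whose vec is the l-th unit vector,
   so that P_theta *m vec M = vex M for all M. *)
Definition Ptheta : 'M[R]_(3, 3 * 3) :=
  \matrix_(k, l) vex (unvec3 (delta_mx l 0)) k 0.

Definition Pr : 'M[R]_(3 * 3, 3 * 3 + 3) := row_mx 1%:M 0.

Definition Hr (H : 'M[R]_(3 * 3 + 3)) : 'M[R]_(3 * 3) :=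
  invmx (Pr *m invmx H *m Pr^T).

Definition Htheta (H : 'M[R]_(3 * 3 + 3)) (Rb : 'M[R]_3) : 'M[R]_3 :=
  let K := Rb^T *t (1%:M : 'M[R]_3) in
  4 *: invmx (Ptheta *m invmx (K^T *m Hr H *m K) *m Ptheta^T).

End Defs.

(* Marginalising a Gaussian-type confidence ellipsoid never enlarges it: for
   G positive definite and P of full row rank,
   (Pz)^T (P G^-1 P^T)^-1 (Pz) <= z^T G z, the gap being the G-form of z - u
   with u = G^-1 P^T (P G^-1 P^T)^-1 P z.  Applying this first to P_r (which
   drops the translation) and then, after the invertible change of variables
   vec(R - Rb) = (Rb^T (x) I) vec(R_w(th) - I), to P_theta gives the claim,
   because P_theta vec(R_w(th) - I) = 2 sin th w: the quadratic term of
   Rodrigues' formula is symmetric and so lies in the kernel of P_theta. *)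

From Pilot Require Import Defs.
From mathcomp Require Import all_boot all_order all_algebra.
From mathcomp Require Import all_classical all_reals all_analysis.
From mathcomp Require Import mxtens ring lra.
Import Order.TTheory GRing.Theory Num.Theory.
Local Open Scope ring_scope.

Section QuadraticForms.
Context {R : realType}.

Lemma qform_mulmx {m n} (A : 'M[R]_n) (P : 'M[R]_(n, m)) x :
  qform (P^T *m A *m P) x = qform A (P *m x).
Proof. by rewrite /qform trmx_mul !mulmxA. Qed.

Lemma qformZl {n} a (A : 'M[R]_n) x : qform (a *: A) x = a * qform A x.
Proof. by rewrite /qform -scalemxAr -scalemxAl mxE. Qed.

Lemma qformZr {n} a (A : 'M[R]_n) x : qform A (a *: x) = a ^+ 2 * qform A x.
Proof.
by rewrite /qform -scalemxAr [(a *: x)^T]linearZ /= -!scalemxAl scalerA !mxE.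
Qed.

Lemma qformB {n} (A : 'M[R]_n) x y : A^T = A ->
  qform A (x - y) = qform A x - 2 * (x^T *m A *m y) 0 0 + qform A y.
Proof.
move=> sA; have yAx : y^T *m A *m x = (x^T *m A *m y)^T.
  by rewrite !trmx_mul trmxK sA mulmxA.
rewrite /qform [(x - y)^T]linearB /= !mulmxBl !mulmxBr yAx.
set xAx := x^T *m A *m x; set xAy := x^T *m A *m y; set yAy := y^T *m A *m y.
rewrite !mxE; lra.
Qed.

Lemma mulmx_trmx_eq0 {n} (v : 'rV[R]_n) : (v *m v^T == 0) = (v == 0).
Proof.
apply/idP/idP => [|/eqP->]; last by rewrite mul0mx.
apply: contraTT => /matrix0Pn [i [j]]; rewrite [i]ord1 => vj_neq0.
apply/matrix0Pn; exists 0, 0; apply/lt0r_neq0; rewrite mxE (bigD1 j) //= !mxE.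
apply: ltr_wpDr; first by apply: sumr_ge0 => l _; rewrite !mxE -expr2 sqr_ge0.
by rewrite -expr2 lt_def sqrf_eq0 vj_neq0 sqr_ge0.
Qed.

Lemma posdef_qform_ge0 {n} {A : 'M[R]_n} x : posdef A -> 0 <= qform A x.
Proof.
case=> _ hA; have [->|x_neq0] := eqVneq x 0; last exact/ltW/hA.
by rewrite /qform mulmx0 mxE.
Qed.

Lemma posdef_unitmx {n} {A : 'M[R]_n} : posdef A -> A \in unitmx.
Proof.
case=> _ hA; rewrite -row_free_unit; apply: inj_row_free => v vA0.
apply/eqP; apply: contraT; rewrite -trmx_eq0 => /hA.
by rewrite /qform trmxK vA0 mul0mx mxE ltxx.
Qed.

Lemma posdef_invmx {n} {A : 'M[R]_n} : posdef A -> posdef (invmx A).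
Proof.
move=> pA; have uA := posdef_unitmx pA; case: pA => sA hA.
split=> [|x x_neq0]; first by rewrite trmx_inv sA.
have -> : invmx A = (invmx A)^T *m A *m invmx A.
  by rewrite trmx_inv sA mulVmx // mul1mx.
rewrite qform_mulmx; apply: hA; apply: contraNneq x_neq0 => Ax0.
by rewrite -(mulKVmx uA x) Ax0 mulmx0.
Qed.

Lemma posdef_congr {m n} {A : 'M[R]_n} {P : 'M[R]_(m, n)} :
  posdef A -> row_free P -> posdef (P *m A *m P^T).
Proof.
case=> sA hA fP; split=> [|v v_neq0]; first by rewrite !trmx_mul trmxK sA mulmxA.
rewrite -{1}(trmxK P) qform_mulmx; apply: hA.
by rewrite -trmx_eq0 trmx_mul trmxK mulmx_free_eq0 // trmx_eq0.
Qed.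

Lemma qform_marginal_le {m n} {G : 'M[R]_n} {P : 'M[R]_(m, n)} z :
  posdef G -> row_free P ->
  qform (invmx (P *m invmx G *m P^T)) (P *m z) <= qform G z.
Proof.
move=> pG fP; have uG := posdef_unitmx pG.
have uM := posdef_unitmx (posdef_congr (posdef_invmx pG) fP).
set M := P *m invmx G *m P^T in uM *.
set u := invmx G *m P^T *m invmx M *m (P *m z).
have Gu : G *m u = P^T *m invmx M *m (P *m z) by rewrite /u !mulmxA mulmxV // mul1mx.
have Pu : P *m u = P *m z by rewrite /u !mulmxA -/M mulmxV // mul1mx.
have cross : (z^T *m G *m u) 0 0 = qform (invmx M) (P *m z).
  by rewrite /qform -mulmxA Gu trmx_mul !mulmxA.
have quad : qform G u = qform (invmx M) (P *m z).
  by rewrite /qform -mulmxA Gu !mulmxA -trmx_mul Pu.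
have := posdef_qform_ge0 (z - u) pG.
rewrite qformB ?cross ?quad; [lra | by case: pG].
Qed.

Lemma norm2Z {n} a (x : 'cV[R]_n) : norm2 (a *: x) = `|a| * norm2 x.
Proof.
rewrite /norm2; under eq_bigr do rewrite mxE exprMn.
by rewrite -mulr_sumr sqrtrM ?sqr_ge0 // sqrtr_sqr.
Qed.

End QuadraticForms.

Section VecAndVex.
Context {R : realType}.

Lemma vec_mulmx {m n} (X : 'M[R]_(m, n)) (B : 'M[R]_n) :
  vec (X *m B) = (B^T *t (1%:M : 'M[R]_m)) *m vec X.
Proof.
apply/esym/matrixP => k c; rewrite [c]ord1; case: (mxtens_indexP k) => j i.
rewrite [RHS]mxE mxtens_indexK /= mxE mxE.
rewrite (reindex (@mxtens_index n m)) /=; last first.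
  by exists (@mxtens_unindex n m) => x _; rewrite (mxtens_indexK, mxtens_unindexK).
transitivity (\sum_(l < n) \sum_(i' < m) (B^T j l * (1%:M : 'M[R]_m) i i') * X i' l).
  rewrite pair_big /=; apply: eq_bigr => [[l i'] _] /=.
  by rewrite tensmxE !mxE mxtens_indexK.
apply: eq_bigr => l _; rewrite (bigD1 i) //= big1 => [|i' i'_neq_i].
  by rewrite !mxE eqxx mulr1 addr0 mulrC.
by rewrite !mxE eq_sym (negbTE i'_neq_i) mulr0 mul0r.
Qed.

Lemma vec3K (M : 'M[R]_3) : unvec3 (vec M) = M.
Proof. by apply/matrixP => i j; rewrite !mxE mxtens_indexK. Qed.

Lemma ord3P (k : 'I_3) : [\/ k = i0, k = i1 | k = i2].
Proof.
case: k => [[|[|[|k]]] lt_k3] //; [constructor 1 | constructor 2 | constructor 3];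
  by apply: val_inj; rewrite /= inordK.
Qed.

Lemma ord3_eqE :
  ((i0 == i1) = false) * ((i0 == i2) = false) * ((i1 == i0) = false) *
  ((i1 == i2) = false) * ((i2 == i0) = false) * ((i2 == i1) = false).
Proof. by rewrite /i0 /i1 /i2 -!val_eqE /= !inordK. Qed.

Lemma tr_skew (w : 'cV[R]_3) : (Defs.skew w)^T = - Defs.skew w.
Proof.
apply/matrixP => i j; rewrite !mxE.
by case: (ord3P i) => ->; case: (ord3P j) => ->;
  rewrite ?eqxx ?ord3_eqE /= ?opprK ?oppr0.
Qed.

Lemma vexD (A B : 'M[R]_3) : vex (A + B) = vex A + vex B.
Proof.
by apply/matrixP => k c; rewrite !mxE; case: (k == i0); case: (k == i1); ring.
Qed.

Lemma vexZ a (A : 'M[R]_3) : vex (a *: A) = a *: vex A.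
Proof.
by apply/matrixP => k c; rewrite !mxE; case: (k == i0); case: (k == i1); ring.
Qed.

Lemma vex_sym_eq0 {A : 'M[R]_3} : A^T = A -> vex A = 0.
Proof.
move/matrixP => sA; have Aji i j : A j i = A i j by have := sA i j; rewrite mxE.
apply/matrixP => k c; rewrite !mxE.
by case: ifP => _; [|case: ifP => _];
  rewrite ?(Aji i1 i2) ?(Aji i2 i0) ?(Aji i0 i1) subrr.
Qed.

Lemma vex_skew (w : 'cV[R]_3) : vex (Defs.skew w) = 2 *: w.
Proof.
apply/matrixP => k c; rewrite [c]ord1 !mxE.
by case: (ord3P k) => ->; rewrite ?eqxx ?ord3_eqE /=; ring.
Qed.

Lemma vex_rodrigues (w : 'cV[R]_3) th :
  vex (rodrigues w th - 1%:M) = (2 * sin th) *: w.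
Proof.
set S := Defs.skew w.
have sym_S2 : ((1 - cos th) *: (S *m S))^T = (1 - cos th) *: (S *m S).
  by rewrite linearZ /= trmx_mul tr_skew mulmxN mulNmx opprK.
rewrite /rodrigues -/S addrC !addrA addNr add0r vexD (vex_sym_eq0 sym_S2).
by rewrite addr0 vexZ vex_skew scalerA mulrC.
Qed.

End VecAndVex.

Section Projections.
Context {R : realType}.

Lemma mul_Ptheta_vec (M : 'M[R]_3) : Ptheta R *m vec M = vex M.
Proof.
suff mul_Ptheta v : Ptheta R *m v = vex (unvec3 v) by rewrite mul_Ptheta vec3K.
pose ij k : 'I_3 * 'I_3 :=
  if k == i0 then (i1, i2) else if k == i1 then (i2, i0) else (i0, i1).
have vex_unvec3 (u : 'cV[R]_(3 * 3)) k : vex (unvec3 u) k 0 =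
    u (mxtens_index (ij k)) 0 - u (mxtens_index ((ij k).2, (ij k).1)) 0.
  by rewrite /ij !mxE; case: (k == i0) => //; case: (k == i1).
have sum_delta p : \sum_l (delta_mx l 0 : 'cV[R]_(3 * 3)) p 0 * v l 0 = v p 0.
  rewrite (bigD1 p) //= big1 => [|l l_neq_p]; first by rewrite mxE !eqxx mul1r addr0.
  by rewrite mxE eq_sym (negbTE l_neq_p) mul0r.
apply/matrixP => k c; rewrite [c]ord1 mxE.
under eq_bigr do rewrite mxE vex_unvec3 mulrBl.
by rewrite sumrB !sum_delta vex_unvec3.
Qed.

Lemma row_free_Ptheta : row_free (Ptheta R).
Proof.
apply: inj_row_free => v vP0; apply/eqP.
have : v *m (Ptheta R *m vec (Defs.skew v^T)) = 0 by rewrite mulmxA vP0 mul0mx.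
rewrite mul_Ptheta_vec vex_skew -scalemxAr => /eqP.
by rewrite scalemx_eq0 pnatr_eq0 mulmx_trmx_eq0.
Qed.

Lemma mul_Pr_col (a : 'cV[R]_(3 * 3)) (b : 'cV[R]_3) : Pr R *m col_mx a b = a.
Proof. by rewrite /Pr mul_row_col mul1mx mul0mx addr0. Qed.

Lemma row_free_Pr : row_free (Pr R).
Proof.
apply/row_freeP; exists (Pr R)^T.
by rewrite /Pr tr_row_mx mul_row_col trmx1 trmx0 mul1mx mul0mx addr0.
Qed.

End Projections.

Theorem proposition6 (R : realType) (H : 'M[R]_(3 * 3 + 3))
  (Rb : 'M[R]_3) (tb : 'cV[R]_3) (Rm : 'M[R]_3) (t : 'cV[R]_3)
  (w : 'cV[R]_3) (th : R) :
  posdef H -> is_SO3 Rb -> is_SO3 Rm ->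
  qform H (col_mx (vec (Rm - Rb)) (t - tb)) <= 1 ->
  norm2 w = 1 -> Rm = rodrigues w th *m Rb ->
  0 <= th -> th <= pi / 2 ->
  qform (Htheta H Rb) (sin th *: w) <= 1 /\
  sin th = norm2 (sin th *: w) /\
  (0 < th -> w = (norm2 (sin th *: w))^-1 *: (sin th *: w)).
Proof.
move=> pH [_ det_Rb] _ hq nw def_Rm th_ge0 th_le_pi2.
have th_lt_pi : th < pi.
  by apply: le_lt_trans th_le_pi2 _; rewrite ltr_pdivrMr // ltr_pMr ?pi_gt0 ?ltr1n.
have sin_ge0 : 0 <= sin th by apply: sin_ge0_pi; rewrite th_ge0 ltW.
have norm_sw : norm2 (sin th *: w) = sin th by rewrite norm2Z nw mulr1 ger0_norm.
split; last first.
  split=> [|th_gt0]; rewrite norm_sw //.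
  by rewrite scalerA mulVf ?scale1r // lt0r_neq0 // sin_gt0_pi // th_gt0 th_lt_pi.
set K := Rb^T *t (1%:M : 'M[R]_3).
have fK : row_free K^T.
  rewrite row_free_unit unitmx_tr tensmx_unit ?unitmx1 //.
  by rewrite unitmx_tr unitmxE det_Rb unitr1.
have pHr : posdef (Hr H) := posdef_invmx (posdef_congr (posdef_invmx pH) row_free_Pr).
have vec_dR : vec (Rm - Rb) = K *m vec (rodrigues w th - 1%:M).
  by rewrite -vec_mulmx mulmxBl mul1mx def_Rm.
have le_Hr := qform_marginal_le (col_mx (vec (Rm - Rb)) (t - tb)) pH row_free_Pr.
rewrite mul_Pr_col -/(Hr H) {1}vec_dR -qform_mulmx in le_Hr.
have le_Htheta := qform_marginal_le (vec (rodrigues w th - 1%:M))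
  (posdef_congr pHr fK) row_free_Ptheta.
rewrite trmxK mul_Ptheta_vec vex_rodrigues -scalerA qformZr in le_Htheta.
apply: le_trans hq; apply: le_trans le_Hr; apply: le_trans le_Htheta.
by rewrite /Htheta -/K qformZl -natrX.
Qed.
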